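(* Let $\mathbb{V}$ and $\mathbb{V}'$ be varieties with the same signature $\mathcal{F}$ and defining sets of identities $\Sigma\subseteq\Sigma'$ respectively, and suppose $\mathbb{V}$ is BIT speciale. Then any set of ideal terms determining ideals in $\mathbb{V}$ determines ideals in $\mathbb{V}'$ too.
   Context: BIT speciale: the algebraic theory of $\mathbb{V}$ contains a constant $0$ and, for some $n\ge1$, binary terms $\alpha_1,\dots,\alpha_n$ and an $(n+1)$-ary term $\theta$ such that $\alpha_i(x,x)=0$ and $\theta(\alpha_1(x,y),\dots,\alpha_n(x,y),y)=x$ are identities of $\mathbb{V}$. For a variety $\mathbb{W}$ with signature $\mathcal{F}$: an ideal term of $\mathbb{W}$ in the variables $y_1,\dots,y_p$ is a term $t(x_1,\dots,x_m,y_1,\dots,y_p)$ with $t(x_1,\dots,x_m,0,\dots,0)=0$ an identity of $\mathbb{W}$; a non-empty subset $H$ of a $\mathbb{W}$-algebra $A$ is an ideal if $t(a_1,\dots,a_m,b_1,\dots,b_p)\in H$ for every ideal term $t$, all $a_r\in A$, $b_s\in H$. A set $T$ of ideal terms determines ideals in $\mathbb{W}$ if for every $\mathbb{W}$-algebra $A$, a non-empty $H\subseteq A$ is an ideal iff every $t\in T$ takes values in $H$ whenever its $x$-variables are assigned elements of $A$ and its $y$-variables elements of $H$. *)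

From mathcomp Require Import all_boot.
Set Implicit Arguments.
Unset Strict Implicit.
Unset Printing Implicit Defensive.

Record signature := Signature { op : Type; arity : op -> nat }.

Inductive term (F : signature) (V : Type) : Type :=
| Var : V -> term F V
| App : forall f : op F, ('I_(arity f) -> term F V) -> term F V.
Arguments Var {F V}.
Arguments App {F V}.

Record algebra (F : signature) := Algebra {
  carrier :> Type;
  interp : forall f : op F, ('I_(arity f) -> carrier) -> carrier }.

Fixpoint eval (F : signature) (A : algebra F) (V : Type) (v : V -> A)
  (t : term F V) : A :=
  match t with
  | Var x => v x
  | App f args => @interp F A f (fun i => eval v (args i))
  end.

Fixpoint subst (F : signature) (V W : Type) (s : V -> term F W)
  (t : term F V) : term F W :=
  match t with
  | Var x => s x
  | App f args => App f (fun i => subst s (args i))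
  end.

Definition identities (F : signature) := term F nat -> term F nat -> Prop.

Definition model (F : signature) (Sigma : identities F) (A : algebra F) : Prop :=
  forall s t, Sigma s t -> forall v : nat -> A, eval v s = eval v t.

Definition holds (F : signature) (Sigma : identities F) (V : Type)
  (s t : term F V) : Prop :=
  forall A : algebra F, model Sigma A -> forall v : V -> A, eval v s = eval v t.

(* Constants of the algebraic theory: closed terms (no variables). *)
Definition cterm (F : signature) := term F Empty_set.
Definition const (F : signature) (V : Type) (c : cterm F) : term F V :=
  subst (fun e : Empty_set => match e with end) c.

(* BIT speciale, with the data (0, n, alpha_1..alpha_n, theta) explicit.
   alpha_i are binary terms in variables x = true, y = false;
   theta is (n+1)-ary in variables Some i (i < n) and None (last, = y). *)
Definition BIT_speciale_data (F : signature) (Sigma : identities F)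
  (zero : cterm F) (n : nat) (alpha : 'I_n -> term F bool)
  (theta : term F (option 'I_n)) : Prop :=
  (1 <= n)%N /\
  (forall i, holds Sigma (subst (fun _ => Var tt) (alpha i)) (const unit zero)) /\
  holds Sigma
    (subst (fun o => match o with Some i => alpha i | None => Var false end) theta)
    (Var true).

Definition BIT_speciale (F : signature) (Sigma : identities F) : Prop :=
  exists zero n alpha theta, @BIT_speciale_data F Sigma zero n alpha theta.

(* Terms t(x_1,...,x_m, y_1,...,y_p): variables inl i are x's, inr j are y's. *)
Definition xyterm (F : signature) := term F (nat + nat).

Definition ideal_term (F : signature) (Sigma : identities F) (zero : cterm F)
  (t : xyterm F) : Prop :=
  holds Sigma
    (subst (fun v : nat + nat =>
       match v with inl i => Var i | inr _ => const nat zero end) t)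
    (const nat zero).

Definition xyval (A : Type) (a b : nat -> A) (v : nat + nat) : A :=
  match v with inl i => a i | inr j => b j end.

Definition closed_under (F : signature) (A : algebra F) (H : A -> Prop)
  (t : xyterm F) : Prop :=
  forall a b : nat -> A, (forall j, H (b j)) -> H (eval (xyval a b) t).

Definition is_ideal (F : signature) (Sigma : identities F) (zero : cterm F)
  (A : algebra F) (H : A -> Prop) : Prop :=
  (exists a, H a) /\
  forall t, ideal_term Sigma zero t -> closed_under H t.

Definition determines_ideals (F : signature) (Sigma : identities F)
  (zero : cterm F) (T : xyterm F -> Prop) : Prop :=
  (forall t, T t -> ideal_term Sigma zero t) /\
  forall A : algebra F, model Sigma A ->
    forall H : A -> Prop, (exists a, H a) ->
      (is_ideal Sigma zero H <-> forall t, T t -> closed_under H t).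

(** Let [A] satisfy [Sigma'], so also [Sigma], and let [H] be a [Sigma]-ideal
    of [A]; the converse inclusion of ideals is trivial.  For a
    [Sigma']-ideal term [t(x, y)], put [t0 := t(x, 0)] and
    [u := theta(alpha_1(t, t0), ..., alpha_n(t, t0), 0)].  Setting [y := 0]
    makes both arguments of each [alpha_i] equal, so [u] is already an ideal
    term of [Sigma]; on the other hand [t0 = 0] holds in [A], where therefore
    [u = theta(alpha(t, 0), 0) = t].  Hence [H] is closed under [t], so
    [Sigma]- and [Sigma']-ideals of [A] coincide, and a set of terms singling
    out the former singles out the latter. *)
From mathcomp Require Import all_boot.
From Stdlib Require Import FunctionalExtensionality.

Set Implicit Arguments.
Unset Strict Implicit.

Lemma eq_eval (F : signature) (A : algebra F) (V : Type) (v w : V -> A)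
  (t : term F V) : (forall x, v x = w x) -> eval v t = eval w t.
Proof. by move=> vw; rewrite (functional_extensionality _ _ vw). Qed.

Lemma eval_subst (F : signature) (A : algebra F) (V W : Type) (v : W -> A)
  (s : V -> term F W) (t : term F V) :
  eval v (subst s t) = eval (fun x => eval v (s x)) t.
Proof.
elim: t => [x|f args IH] //=.
by congr (interp _); apply: functional_extensionality => i; apply: IH.
Qed.

Definition ceval (F : signature) (A : algebra F) (c : cterm F) : A :=
  eval (fun e : Empty_set => match e with end) c.

Lemma eval_const (F : signature) (A : algebra F) (V : Type) (v : V -> A)
  (c : cterm F) : eval v (const V c) = ceval A c.
Proof. by rewrite eval_subst; apply: eq_eval => -[]. Qed.

Section Weakening.

Variables (F : signature) (Sigma Sigma' : identities F).
Hypothesis Sigma_sub : forall s t, Sigma s t -> Sigma' s t.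

Lemma model_sub (A : algebra F) : model Sigma' A -> model Sigma A.
Proof. by move=> modA s t /Sigma_sub; apply: modA. Qed.

Lemma holds_sub (V : Type) (s t : term F V) :
  holds Sigma s t -> holds Sigma' s t.
Proof. by move=> st A /model_sub; apply: st. Qed.

Lemma ideal_term_sub (zero : cterm F) (t : xyterm F) :
  ideal_term Sigma zero t -> ideal_term Sigma' zero t.
Proof. exact: holds_sub. Qed.

Lemma is_ideal_sup (zero : cterm F) (A : algebra F) (H : A -> Prop) :
  is_ideal Sigma' zero H -> is_ideal Sigma zero H.
Proof. by case=> neH closedH; split=> // t /ideal_term_sub; apply: closedH. Qed.

End Weakening.

Section IdealTerms.

Variables (F : signature) (zero : cterm F).

Definition zero_ys (t : xyterm F) : xyterm F :=
  subst (fun v => match v with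
                  | inl i => Var (inl i)
                  | inr _ => const (nat + nat) zero end) t.

Lemma eval_zero_ys (A : algebra F) (a b : nat -> A) (t : xyterm F) :
  eval (xyval a b) (zero_ys t) = eval (xyval a (fun _ => ceval A zero)) t.
Proof. by rewrite eval_subst; apply: eq_eval => -[i|j] //=; rewrite eval_const. Qed.

Lemma ideal_termP (Sigma : identities F) (t : xyterm F) :
  ideal_term Sigma zero t <->
  forall A : algebra F, model Sigma A -> forall a : nat -> A,
    eval (xyval a (fun _ => ceval A zero)) t = ceval A zero.
Proof.
have eval_t0 (A : algebra F) (a : nat -> A) :
    eval a (subst (fun v => match v with
                   | inl i => Var i | inr _ => const nat zero end) t) =
    eval (xyval a (fun _ => ceval A zero)) t.
  by rewrite eval_subst; apply: eq_eval => -[i|j] //=; rewrite eval_const.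
split=> [idt A modA a | idt A modA a].
  by rewrite -eval_t0 (idt A modA) eval_const.
by rewrite eval_t0 idt // eval_const.
Qed.

End IdealTerms.

Section BITSpeciale.

Variables (F : signature) (Sigma : identities F) (zero : cterm F) (n : nat).
Variables (alpha : 'I_n -> term F bool) (theta : term F (option 'I_n)).
Hypothesis HBIT : BIT_speciale_data Sigma zero alpha theta.

Definition bit_term : term F bool :=
  subst (fun o => match o with
                  | Some i => alpha i
                  | None => const bool zero end) theta.

Lemma eval_alpha_diag (A : algebra F) (c : A) i :
  model Sigma A -> eval (fun _ => c) (alpha i) = ceval A zero.
Proof.
case: HBIT => _ [alpha_diag _] modA.
by have := alpha_diag i A modA (fun _ => c); rewrite eval_subst eval_const.
Qed.

Lemma eval_theta_alpha (A : algebra F) (v : bool -> A) :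
  model Sigma A ->
  eval (fun o => match o with
                 | Some i => eval v (alpha i)
                 | None => v false end) theta = v true.
Proof.
case: HBIT => _ [_ theta_alpha] modA.
have := theta_alpha A modA v; rewrite eval_subst /= => <-.
by apply: eq_eval => -[].
Qed.

Lemma eval_bit_term_zero (A : algebra F) (c : A) :
  model Sigma A ->
  eval (fun b : bool => if b then c else ceval A zero) bit_term = c.
Proof.
move=> modA; rewrite eval_subst.
rewrite -{2}(eval_theta_alpha (fun b : bool => if b then c else ceval A zero) modA).
by apply: eq_eval => -[i|] //=; rewrite eval_const.
Qed.

Lemma eval_bit_term_diag (A : algebra F) (c : A) :
  model Sigma A -> eval (fun _ => c) bit_term = ceval A zero.
Proof.
move=> modA.
have eval_bit_const (d : A) :
    eval (fun _ => d) bit_term = eval (fun _ => ceval A zero) theta.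
  rewrite eval_subst; apply: eq_eval => -[i|] /=.
    exact: eval_alpha_diag.
  exact: eval_const.
rewrite eval_bit_const -(eval_bit_const (ceval A zero)).
rewrite -[RHS](eval_bit_term_zero (ceval A zero) modA).
by apply: eq_eval => -[].
Qed.

Definition bit_ideal_term (t : xyterm F) : xyterm F :=
  subst (fun b : bool => if b then t else zero_ys zero t) bit_term.

Lemma bit_ideal_termP (t : xyterm F) : ideal_term Sigma zero (bit_ideal_term t).
Proof.
apply/ideal_termP => A modA a.
set c := eval (xyval a (fun=> ceval A zero)) t.
rewrite eval_subst -[RHS](eval_bit_term_diag c modA).
by apply: eq_eval => -[] //; rewrite eval_zero_ys.
Qed.

Lemma eval_bit_ideal_term (A : algebra F) (a b : nat -> A) (t : xyterm F) :
  model Sigma A -> eval (xyval a b) (zero_ys zero t) = ceval A zero ->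
  eval (xyval a b) (bit_ideal_term t) = eval (xyval a b) t.
Proof.
move=> modA t0_zero; rewrite eval_subst -[RHS](eval_bit_term_zero _ modA).
by apply: eq_eval => -[].
Qed.

Lemma is_ideal_sub (Sigma' : identities F)
    (Sigma_sub : forall s t, Sigma s t -> Sigma' s t)
    (A : algebra F) (H : A -> Prop) :
  model Sigma' A -> is_ideal Sigma zero H -> is_ideal Sigma' zero H.
Proof.
move=> modA [neH closedH]; split=> // t /ideal_termP t_zero a b Hb.
have t0_zero : eval (xyval a b) (zero_ys zero t) = ceval A zero.
  by rewrite eval_zero_ys t_zero.
rewrite -(eval_bit_ideal_term (model_sub Sigma_sub modA) t0_zero).
exact: closedH (bit_ideal_termP t) a b Hb.
Qed.

End BITSpeciale.

Theorem corollary2p10 (F : signature) (Sigma Sigma' : identities F)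
  (Hsub : forall s t, Sigma s t -> Sigma' s t)
  (zero : cterm F) (n : nat) (alpha : 'I_n -> term F bool)
  (theta : term F (option 'I_n))
  (HBIT : BIT_speciale_data Sigma zero alpha theta)
  (T : xyterm F -> Prop) :
  determines_ideals Sigma zero T -> determines_ideals Sigma' zero T.
Proof.
case=> T_ideal T_determines; split=> [t /T_ideal | A modA H neH].
  exact: ideal_term_sub.
have modA_Sigma := model_sub Hsub modA.
split=> [/(is_ideal_sup Hsub) | closedT].
  exact: (T_determines A modA_Sigma H neH).1.
apply: (is_ideal_sub HBIT Hsub modA).
exact: (T_determines A modA_Sigma H neH).2.
Qed.
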